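(* Let $G=(V,E)$ be a connected hypergraph with at least two vertices. Then: (a) there exists at least one construction sequence; (b) if $G$ is a hypertree, then every construction sequence $(A_1,\ldots,A_m)$ satisfies $\big|\big(\bigcup_{i=1}^{\ell-1}A_i\big)\cap A_\ell\big|=1$ for all $2\le\ell\le m$; (c) if $G$ is not a hypertree, then every construction sequence $(A_1,\ldots,A_m)$ satisfies $\big|\big(\bigcup_{i=1}^{\ell-1}A_i\big)\cap A_\ell\big|\ge2$ for at least one $\ell$.
   Context: A hypergraph is a pair $G=(V,E)$ with $V$ finite and $E$ a set of subsets of $V$, each of cardinality at least 2. A walk is a sequence $(v_0,e_1,v_1,\ldots,e_k,v_k)$ with $v_i\in V$, $e_i\in E$ and $v_{i-1},v_i\in e_i$; $G$ is connected if any two vertices are joined by a walk. A cycle is a walk with $v_0,\ldots,v_{k-1}$ distinct, $v_k=v_0$, $e_1,\ldots,e_k$ distinct and $k\ge2$. A hypertree is a connected hypergraph with no cycles. For a connected hypergraph with $|V|\ge2$, a construction sequence is an ordering $(A_1,\ldots,A_m)$ of all of $E$ such that $\big(\bigcup_{i=1}^{\ell-1}A_i\big)\cap A_\ell\neq\emptyset$ for $2\le\ell\le m$. *)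

From mathcomp Require Import all_boot.
Set Implicit Arguments. Unset Strict Implicit. Unset Printing Implicit Defensive.

Definition hypergraph (V : finType) (E : {set {set V}}) : Prop :=
  forall e, e \in E -> 1 < #|e|.

(* A walk (v_0, e_1, v_1, ..., e_k, v_k) with v_0 = x, vertex list x :: p,
   edge list es (size p = size es = k). *)
Definition walk (V : finType) (E : {set {set V}}) (x : V) (p : seq V)
    (es : seq {set V}) : Prop :=
  size p = size es /\
  forall i, i < size es ->
    [/\ nth set0 es i \in E, nth x (x :: p) i \in nth set0 es i
      & nth x (x :: p) i.+1 \in nth set0 es i].

Definition connected (V : finType) (E : {set {set V}}) : Prop :=
  forall x y : V, exists p es, walk E x p es /\ last x p = y.

Definition is_cycle (V : finType) (E : {set {set V}}) (x : V) (p : seq V)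
    (es : seq {set V}) : Prop :=
  [/\ walk E x p es, uniq (belast x p), last x p = x, uniq es & 2 <= size es].

Definition hypertree (V : finType) (E : {set {set V}}) : Prop :=
  connected E /\ ~ (exists x p es, is_cycle E x p es).

Definition prefix_union (V : finType) (s : seq {set V}) (l : nat) : {set V} :=
  \bigcup_(A <- take l s) A.

(* A construction sequence: an ordering of all of E (0-indexed here) such that
   for every index l with 1 <= l < m, (A_0 u ... u A_{l-1}) meets A_l. *)
Definition construction_seq (V : finType) (E : {set {set V}})
    (s : seq {set V}) : Prop :=
  uniq s /\ (forall e, e \in s = (e \in E)) /\
  forall l, 1 <= l < size s -> prefix_union s l :&: nth set0 s l != set0.

From mathcomp Require Import all_boot.
Set Implicit Arguments. Unset Strict Implicit. Unset Printing Implicit Defensive.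

(* Existence: build the sequence greedily. While some edge is unused, a walk
   from the union of the used edges to a vertex of an unused edge contains an
   edge leaving that union; it is unused and meets the union.
   Hypertrees: if A_l met the union of A_1, ..., A_(l-1) in two vertices u and
   v, a shortest path from v to u in the vertex-edge incidence graph of these
   earlier edges, closed up by A_l, would be a cycle.
   Other hypergraphs: the edge of a cycle that comes last in the sequence
   shares distinct vertices with its two neighbours on the cycle, and both lie
   in the union of the earlier edges. *)

Lemma nth_closed_walk (T : Type) (x : T) p m : last x p = x -> m <= size p ->
  nth x (x :: p) m = nth x (belast x p) (m %% size p).
Proof.
move=> lx; rewrite lastI nth_rcons size_belast lx leq_eqVlt.
case/orP=> [/eqP-> | lt_m]; last by rewrite lt_m modn_small.
by rewrite ltnn eqxx modnn; case: p {lx}.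
Qed.

Lemma ordS_neq n (i : 'I_n) : 1 < n -> ordS i != i.
Proof.
move=> n_gt1; rewrite -val_eqE /=; have := ltn_ord i.
rewrite leq_eqVlt => /orP[/eqP iS | lt_iS]; last by rewrite modn_small // gtn_eqF.
by rewrite iS modnn eq_sym -lt0n -ltnS iS.
Qed.

Section Hypergraphs.
Variable V : finType.
Implicit Types (E : {set {set V}}) (s F : seq {set V}) (e A : {set V}).

Lemma walk_cons E x z p e es :
  walk E x (z :: p) (e :: es) <-> [/\ e \in E, x \in e, z \in e & walk E z p es].
Proof.
split=> [[/= [sz] w] | [eE xe ze [sz w]]].
  have [eE xe ze] := w 0 isT; split=> //; split=> // i lt_i.
  have lt_ip : i < size p by rewrite sz.
  by have := w i.+1 lt_i; rewrite /= !(@set_nth_default _ _ z x) // ltnW.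
split=> [/=|[_|i]]; first by rewrite sz.
  by split.
rewrite /= ltnS => lt_i; have lt_ip : i < size p by rewrite sz.
by have := w i lt_i; rewrite !(@set_nth_default _ _ x z) // ltnW.
Qed.

Lemma walk_sub E1 E2 x p es :
  {subset E1 <= E2} -> walk E1 x p es -> walk E2 x p es.
Proof. by move=> sE [sz w]; split=> // i /w[/sE]. Qed.

Lemma walk_edges E x p es : walk E x p es -> {subset es <= E}.
Proof. by move=> [_ w] e /(nthP set0)[i /w[? _ _] <-]. Qed.

Definition cover s : {set V} := \bigcup_(A <- s) A.

Lemma coverP s x : reflect (exists2 A, A \in s & x \in A) (x \in cover s).
Proof. by rewrite /cover bigcup_seq; apply: bigcupP. Qed.

Lemma sub_cover s A : A \in s -> A \subset cover s.
Proof. by move=> As; apply/subsetP => x xA; apply/coverP; exists A. Qed.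

Lemma cover_rcons s e : cover (rcons s e) = cover s :|: e.
Proof. by rewrite /cover -cats1 big_cat big_seq1. Qed.

Definition chained s :=
  forall l, 1 <= l < size s -> prefix_union s l :&: nth set0 s l != set0.

Lemma chained_rcons s e :
  chained (rcons s e) <-> chained s /\ (s != [::] -> cover s :&: e != set0).
Proof.
have take_rcons l : l <= size s -> take l (rcons s e) = take l s.
  by move=> le_l; rewrite -cats1 takel_cat.
rewrite /chained /prefix_union size_rcons; split=> [ch | [ch meet] l].
  split=> [l /andP[l_gt0 lt_l] | s_ne0].
    have := ch l; rewrite l_gt0 ltnS (ltnW lt_l) take_rcons ?(ltnW lt_l) //.
    by rewrite nth_rcons lt_l; apply.
  have := ch (size s); rewrite lt0n size_eq0 s_ne0 ltnS leqnn take_rcons //.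
  by rewrite nth_rcons ltnn eqxx take_size; apply.
rewrite ltnS => /andP[l_gt0]; rewrite leq_eqVlt => /orP[/eqP l_size | lt_l].
  rewrite l_size take_rcons // take_size nth_rcons ltnn eqxx; apply: meet.
  by rewrite -size_eq0 -lt0n -l_size.
by rewrite take_rcons ?nth_rcons ?lt_l ?(ltnW lt_l) //; apply: ch; rewrite l_gt0.
Qed.

Lemma chained_take s l : chained s -> chained (take l s).
Proof.
move=> ch i /andP[i_gt0]; rewrite size_take_min leq_min => /andP[lt_il lt_i].
rewrite /prefix_union take_takel ?(ltnW lt_il) // nth_take //.
by apply: ch; rewrite i_gt0.
Qed.

Definition incidence F : rel (V + {set V}) := fun a b =>
  match a, b with
  | inl x, inr e | inr e, inl x => (e \in F) && (x \in e)
  | _, _ => false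
  end.

Lemma incidence_sym F : symmetric (incidence F).
Proof. by case=> [x|e] [y|f]. Qed.

Lemma connect_incidence_sub F1 F2 a b : {subset F1 <= F2} ->
  connect (incidence F1) a b -> connect (incidence F2) a b.
Proof.
move=> sF; apply: connect_sub => {a b} [[x|e] [y|f]] //= /andP[/sF eF xe];
  by apply: connect1; rewrite /= eF xe.
Qed.

Lemma connect_incidence_edge F e x y : e \in F -> x \in e -> y \in e ->
  connect (incidence F) (inl x) (inl y).
Proof.
move=> eF xe ye; apply: (connect_trans (y := inr e)); apply: connect1;
  by rewrite /= eF ?xe ?ye.
Qed.

Lemma chained_connect s u v : chained s -> u \in cover s -> v \in cover s ->
  connect (incidence s) (inl u) (inl v).
Proof.
elim/last_ind: s u v => [|s e IH] u v; first by move=> _ /coverP[].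
case/chained_rcons=> ch meet.
have eF : e \in rcons s e by rewrite mem_rcons mem_head.
have sF : {subset s <= rcons s e} by move=> A As; rewrite mem_rcons inE As orbT.
have [-> | s_ne0] := eqVneq s [::].
  by rewrite /= /cover big_seq1; apply: connect_incidence_edge; rewrite inE.
have [w] := set0Pn _ (meet s_ne0); rewrite inE => /andP[ws we].
suff to_w z : z \in cover (rcons s e) ->
    connect (incidence (rcons s e)) (inl z) (inl w).
  move=> /to_w uw /to_w vw; apply: connect_trans uw _.
  by rewrite (sym_connect_sym (incidence_sym _)).
rewrite cover_rcons inE => /orP[zs | ze].
  by apply: connect_incidence_sub sF _; apply: IH.
exact: connect_incidence_edge eF ze we.
Qed.

Definition vertex_of (a : V + {set V}) : option V :=
  if a is inl x then Some x else None.

Definition edge_of (a : V + {set V}) : option {set V} :=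
  if a is inr e then Some e else None.

Lemma incidence_path_walk F (x y : V) (q : seq (V + {set V})) :
  path (incidence F) (inl x) q -> last (inl x) q = inl y ->
  walk [set e in F] x (pmap vertex_of q) (pmap edge_of q) /\
  last x (pmap vertex_of q) = y.
Proof.
have [n] := ubnP (size q); elim: n q x => // n IH [|[x1|e] [|[z|f] q]] x //=;
  rewrite ?andbF //.
  by move=> _ _ [<-]; split=> //; split.
rewrite !ltnS => /ltnW lt_qn /and3P[/andP[eF xe] /andP[_ ze] pq] lq.
have [wq <-] := IH q z lt_qn pq lq; split=> //.
by apply/walk_cons; split; rewrite ?inE.
Qed.

Lemma construction_seq_cycle E s l :
  construction_seq E s -> l < size s ->
  1 < #|prefix_union s l :&: nth set0 s l| -> exists x p es, is_cycle E x p es.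
Proof.
move=> [uniq_s [memE ch]] lt_l /card_gt1P[u [v []]].
rewrite !inE => /andP[up uA] /andP[vp vA] uv.
set A := nth set0 s l in uA vA.
have /connectP[q pq] := chained_connect (chained_take (l := l) ch) vp up.
case: (shortenP pq) => {}q {}pq uniq_q _ /esym/(incidence_path_walk pq)[w lu].
have uniq_p : uniq (v :: pmap vertex_of q).
  by apply: (pmap_uniq (f := vertex_of) (g := inl) _ uniq_q); case.
have uniq_es : uniq (pmap edge_of q).
  by apply: (pmap_uniq (f := edge_of) (g := inr) _ uniq_q); case.
have AE : A \in E by rewrite -memE mem_nth.
have A_notin : A \notin take l s by rewrite in_take ?mem_nth // index_uniq ?ltnn.
have prefix_E : {subset [set e in take l s] <= E}.
  by move=> e; rewrite inE => /mem_take; rewrite memE.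
exists u, (v :: pmap vertex_of q), (A :: pmap edge_of q); split=> //.
- by apply/walk_cons; split=> //; apply: walk_sub prefix_E w.
- by rewrite /= -rcons_uniq -{1}lu -lastI.
- rewrite /= uniq_es andbT; apply: contra A_notin => /(walk_edges w).
  by rewrite inE.
- case: w => /= size_p _; rewrite ltnS lt0n size_eq0 -size_eq0 -size_p size_eq0.
  by apply: contraNneq uv => p0; rewrite -lu p0.
Qed.

Lemma cycle_edge_vertices E x p es (i : 'I_(size es)) : is_cycle E x p es ->
  nth x (belast x p) i \in nth set0 es i /\
  nth x (belast x p) (ordS i) \in nth set0 es i.
Proof.
case=> [[size_p w] _ lx _ _]; have [_] := w i (ltn_ord i).
by rewrite !nth_closed_walk ?size_p ?(ltnW (ltn_ord i)) // modn_small.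
Qed.

Lemma cycle_edge_meets_others E x p es (j : 'I_(size es)) : is_cycle E x p es ->
  1 < #|nth set0 es j :&: \bigcup_(i < size es | i != j) nth set0 es i|.
Proof.
move=> cyc; have [[size_p _] uniq_c _ _ two] := cyc.
have Sj_neq := ordS_neq j two.
have [inj inSj] := cycle_edge_vertices j cyc.
apply/card_gt1P; exists (nth x (belast x p) j), (nth x (belast x p) (ordS j)).
split; rewrite ?inE ?inj ?inSj.
- apply/bigcupP; exists (ord_pred j).
    by apply: contraNneq Sj_neq => Pj; rewrite -{1}Pj ord_predK.
  by have [_] := cycle_edge_vertices (ord_pred j) cyc; rewrite ord_predK.
- apply/bigcupP; exists (ordS j) => //.
  by have [] := cycle_edge_vertices (ordS j) cyc.
- by rewrite nth_uniq ?size_belast ?size_p // eq_sym.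
Qed.

Lemma cycle_construction_seq_meet E s x p es :
  is_cycle E x p es -> construction_seq E s ->
  exists l, 1 <= l < size s /\ 1 < #|prefix_union s l :&: nth set0 s l|.
Proof.
move=> cyc [uniq_s [memE _]]; have [w _ _ uniq_es two] := cyc.
have es_s i : i < size es -> nth set0 es i \in s.
  by move=> lt_i; rewrite memE (walk_edges w) ?mem_nth.
pose j0 : 'I_(size es) := Ordinal (ltnW two).
pose pos (j : 'I_(size es)) := index (nth set0 es j) s.
case: (arg_maxnP pos (isT : xpredT j0)) => j _ jmax.
set l := index (nth set0 es j) s.
have lt_l : l < size s by rewrite index_mem es_s.
have others :
    \bigcup_(i < size es | i != j) nth set0 es i \subset prefix_union s l.
  apply/bigcupsP => i ij; apply: sub_cover; rewrite in_take ?es_s //.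
  rewrite ltn_neqAle (jmax i isT : index _ s <= l) andbT.
  apply: contra ij => /eqP/(index_inj set0).
  by rewrite !es_s // => /(_ isT isT)/eqP; rewrite nth_uniq.
have meet2 : 1 < #|prefix_union s l :&: nth set0 s l|.
  rewrite nth_index ?es_s // setIC.
  apply: leq_trans (cycle_edge_meets_others j cyc) _.
  by apply/subset_leq_card/setIS.
exists l; split=> //; rewrite lt_l andbT lt0n.
apply: contraTneq meet2 => ->.
by rewrite /prefix_union take0 big_nil set0I cards0.
Qed.

Lemma walk_crossing E (U : {set V}) x p es :
  walk E x p es -> x \in U -> last x p \notin U ->
  exists2 e, e \in E & (U :&: e != set0) && ~~ (e \subset U).
Proof.
elim: p x es => [|z p IH] x [|e es] //; [by move=> _ -> | by case | by case |].
case/walk_cons=> eE xe ze w xU lz; have [zU | zNU] := boolP (z \in U).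
  exact: IH w zU lz.
exists e => //; apply/andP; split.
  by apply/set0Pn; exists x; rewrite inE xU.
by apply/subsetPn; exists z.
Qed.

Lemma connected_cover_meets E s e0 :
  hypergraph E -> connected E -> s != [::] -> {subset s <= E} ->
  e0 \in E -> e0 \notin s ->
  exists2 e, e \in E & (e \notin s) && (cover s :&: e != set0).
Proof.
move=> hE conn s_ne0 sE e0E e0s.
have nonempty e : e \in E -> exists z, z \in e.
  by move=> eE; apply/set0Pn; rewrite -card_gt0 ltnW ?hE.
have [A As] : exists A, A \in s.
  by case: s s_ne0 {sE e0s} => // A s _; exists A; rewrite inE eqxx.
have [x xA] := nonempty A (sE A As); have [y ye0] := nonempty e0 e0E.
have xU : x \in cover s by apply/coverP; exists A.
have [yU | yNU] := boolP (y \in cover s).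
  by exists e0; rewrite // e0s; apply/set0Pn; exists y; rewrite inE yU.
have [p [es [w ly]]] := conn x y.
have lNU : last x p \notin cover s by rewrite ly.
have [e eE /andP[meet notsub]] := walk_crossing w xU lNU.
by exists e; rewrite // meet andbT; apply: contra notsub; apply: sub_cover.
Qed.

Lemma construction_prefix_exists E n :
  hypergraph E -> connected E -> n <= #|E| ->
  exists s, [/\ uniq s, {subset s <= E}, size s = n & chained s].
Proof.
move=> hE conn; elim: n => [|n IH] n_le.
  by exists [::]; split=> // l /andP[].
have [s [uniq_s sE size_s ch]] := IH (ltnW n_le).
have [e0 e0E e0s] : exists2 e0, e0 \in E & e0 \notin s.
  apply/subsetPn/negP => /subset_leq_card.
  by rewrite (card_uniqP uniq_s) size_s leqNgt n_le.
have [e eE /andP[es meet]] :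
    exists2 e, e \in E &
      (e \notin s) && ((s != [::]) ==> (cover s :&: e != set0)).
  have [-> | s_ne0] := eqVneq s [::]; first by exists e0.
  have [e eE /andP[es meet]] := connected_cover_meets hE conn s_ne0 sE e0E e0s.
  by exists e; rewrite ?es ?meet ?implybT.
exists (rcons s e); split.
- by rewrite rcons_uniq es uniq_s.
- by move=> A; rewrite mem_rcons inE => /orP[/eqP-> | /sE].
- by rewrite size_rcons size_s.
- by apply/chained_rcons; split=> //; apply/implyP.
Qed.

Lemma construction_seq_exists E : hypergraph E -> connected E ->
  exists s, construction_seq E s.
Proof.
move=> hE conn.
have [s [uniq_s sE size_s ch]] := construction_prefix_exists hE conn (leqnn _).
have card_s : #|s| = #|E| by rewrite (card_uniqP uniq_s).
exists s; split=> //; split=> // e.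
by have /(subset_cardP card_s)/(_ e) : s \subset E by apply/subsetP.
Qed.

End Hypergraphs.

Theorem proposition2p2 (V : finType) (E : {set {set V}}) :
  hypergraph E -> connected E -> 1 < #|V| ->
  [/\ exists s, construction_seq E s,
      hypertree E -> forall s, construction_seq E s ->
        forall l, 1 <= l < size s -> #|prefix_union s l :&: nth set0 s l| = 1
    & ~ hypertree E -> forall s, construction_seq E s ->
        exists l, 1 <= l < size s /\ 2 <= #|prefix_union s l :&: nth set0 s l|].
Proof.
move=> hE conn _; split.
- exact: construction_seq_exists.
- move=> [_ acyclic] s cs l /andP[l_gt0 lt_l].
  apply/eqP; rewrite eqn_leq card_gt0 (cs.2.2 l) ?l_gt0 // andbT leqNgt.
  by apply/negP => /(construction_seq_cycle cs lt_l)/acyclic.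
- move=> not_tree s cs.
  pose double_meet l := 1 < #|prefix_union s l :&: nth set0 s l|.
  have [/existsP[[l lt_l] /andP[l_gt0 meet2]] | none] :=
    boolP [exists l : 'I_(size s), (0 < l) && double_meet l].
    by exists l; rewrite l_gt0 lt_l.
  case: not_tree; split=> // [[x [p [es cyc]]]].
  have [l [/andP[l_gt0 lt_l] meet2]] := cycle_construction_seq_meet cyc cs.
  by case/existsP: none; exists (Ordinal lt_l); rewrite l_gt0.
Qed.
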